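(* Let $R$ be a commutative ring with identity and let $A$ be a $2\times 2$ matrix over $R$ whose entries generate the ideal $R$. Then $A$ is equivalent to a diagonal matrix if and only if the submodule of $R^2$ generated by the rows of $A$ contains a unimodular row. Moreover, in this case $A$ is equivalent to a matrix of the form $\begin{pmatrix}1&0\\0&d\end{pmatrix}$ for some $d\in R$.
   Context: Two matrices $A,B\in M_{m,n}(R)$ are equivalent if there exist invertible matrices $P\in M_{m,m}(R)$ and $Q\in M_{n,n}(R)$ with $B=PAQ$. A row $[r_1,\dots,r_n]$ over $R$ is unimodular if $r_1,\dots,r_n$ generate the unit ideal $R$. *)

From HB Require Import structures.
From mathcomp Require Import all_boot all_order all_algebra.
Set Implicit Arguments. Unset Strict Implicit. Unset Printing Implicit Defensive.
Import GRing.Theory.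
Local Open Scope ring_scope.

Definition mx_equiv (R : comUnitRingType) (m n : nat) (A B : 'M[R]_(m, n)) : Prop :=
  exists (P : 'M[R]_m) (Q : 'M[R]_n),
    P \in unitmx /\ Q \in unitmx /\ B = P *m A *m Q.

Definition unimodular_row (R : comUnitRingType) (n : nat) (r : 'rV[R]_n) : Prop :=
  exists c : 'rV[R]_n, \sum_(j < n) c 0 j * r 0 j = 1.

Definition entries_generate_unit (R : comUnitRingType) (m n : nat) (A : 'M[R]_(m, n)) : Prop :=
  exists c : 'M[R]_(m, n), \sum_(i < m) \sum_(j < n) c i j * A i j = 1.

(* The submodule of R^n generated by the rows of A is { x *m A | x : 'rV_m }. *)
Definition rowspan_has_unimodular (R : comUnitRingType) (m n : nat) (A : 'M[R]_(m, n)) : Prop :=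
  exists x : 'rV[R]_m, unimodular_row (x *m A).

(* Equivalence preserves both the ideal generated by the entries and the
   existence of a unimodular row in the row span, and for a diagonal matrix
   whose entries generate R the sum of its rows is unimodular; this gives the
   forward implication.  Conversely, if [x A] is unimodular then so is [x], and
   a unimodular row of length 2 is the first row of an invertible matrix.
   Using such completions on both sides, [A] becomes equivalent to a matrix
   with first row [1 0], which row operations then bring to [diag(1, d)]. *)

From mathcomp Require Import all_boot all_order all_algebra.
From mathcomp Require Import ring.

Set Implicit Arguments.
Unset Strict Implicit.
Unset Printing Implicit Defensive.
Import GRing.Theory.
Local Open Scope ring_scope.

Section MatrixEquivalence.
Context {R : comUnitRingType}.

Lemma mx_equiv_sym m n (A B : 'M[R]_(m, n)) : mx_equiv A B -> mx_equiv B A.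
Proof.
case=> P [Q [uP [uQ ->]]]; exists (invmx P), (invmx Q).
rewrite !unitmx_inv; do 2!split=> //.
by rewrite !mulmxA mulVmx // mul1mx mulmxK.
Qed.

Lemma mx_equiv_trans m n (A B C : 'M[R]_(m, n)) :
  mx_equiv A B -> mx_equiv B C -> mx_equiv A C.
Proof.
case=> P [Q [uP [uQ ->]]] [P' [Q' [uP' [uQ' ->]]]].
exists (P' *m P), (Q *m Q'); rewrite !unitmx_mul uP uP' uQ uQ'.
by do 2!split=> //; rewrite !mulmxA.
Qed.

Lemma unimodular_rowP n (r : 'rV[R]_n) :
  unimodular_row r <-> exists c : 'cV[R]_n, (r *m c) 0 0 = 1.
Proof.
split=> -[c hc]; exists c^T; rewrite -hc mxE; apply: eq_bigr => j _;
  by rewrite mxE mulrC.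
Qed.

Lemma unimodular_row_of_mulmx n p (r : 'rV[R]_n) (M : 'M[R]_(n, p)) :
  unimodular_row (r *m M) -> unimodular_row r.
Proof.
by move=> /unimodular_rowP [c hc]; apply/unimodular_rowP; exists (M *m c); rewrite mulmxA.
Qed.

Lemma unimodular_row_mulmx n (r : 'rV[R]_n) (Q : 'M[R]_n) :
  Q \in unitmx -> unimodular_row r -> unimodular_row (r *m Q).
Proof.
move=> uQ r_unimodular.
by apply: (unimodular_row_of_mulmx (M := invmx Q)); rewrite mulmxK.
Qed.

Lemma entries_generate_unit_trP m n (A : 'M[R]_(m, n)) :
  entries_generate_unit A <-> exists C : 'M[R]_(n, m), \tr (C *m A) = 1.
Proof.
have trE (C : 'M[R]_(m, n)) : \tr (C^T *m A) = \sum_i \sum_j C i j * A i j.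
  rewrite /mxtrace exchange_big; apply: eq_bigr => i _.
  by rewrite mxE; apply: eq_bigr => j _; rewrite mxE.
split=> -[C hC]; first by exists C^T; rewrite trE.
by exists C^T; rewrite -trE trmxK.
Qed.

Lemma entries_generate_unit_equiv m n (A B : 'M[R]_(m, n)) :
  mx_equiv A B -> entries_generate_unit A -> entries_generate_unit B.
Proof.
move=> /mx_equiv_sym [P [Q [_ [_ ->]]]] /entries_generate_unit_trP [C hC].
apply/entries_generate_unit_trP; exists (Q *m C *m P).
by rewrite -hC !mulmxA [RHS]mxtrace_mulC !mulmxA.
Qed.

Lemma rowspan_has_unimodular_equiv m n (A B : 'M[R]_(m, n)) :
  mx_equiv A B -> rowspan_has_unimodular A -> rowspan_has_unimodular B.
Proof.
case=> P [Q [uP [uQ ->]]] [x hx]; exists (x *m invmx P).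
by rewrite !mulmxA mulmxKV //; apply: unimodular_row_mulmx.
Qed.

Lemma diag_rowspan_has_unimodular n (D : 'M[R]_n) :
  is_diag_mx D -> entries_generate_unit D -> rowspan_has_unimodular D.
Proof.
move=> /diag_mxP [d ->] [c hc]; exists (const_mx 1), (\row_j c j j).
apply: etrans hc.
apply: eq_bigr => i _; rewrite mul_mx_diag !mxE mul1r (bigD1 i) //= big1.
  by rewrite !mxE eqxx mulr1n addr0.
by move=> j /negPf ne_ji; rewrite !mxE eq_sym ne_ji mulr0n mulr0.
Qed.

End MatrixEquivalence.

Section TwoByTwo.
Context {R : comUnitRingType}.

Lemma sum_ord2 (F : 'I_2 -> R) : \sum_(j < 2) F j = F 0 + F 1.
Proof. by rewrite big_ord_recl big_ord1; congr (F _ + F _); apply/val_inj. Qed.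

Lemma mul_mx2E (M N : 'M[R]_2) i j : (M *m N) i j = M i 0 * N 0 j + M i 1 * N 1 j.
Proof. by rewrite mxE sum_ord2. Qed.

Lemma mx2_ext (M N : 'M[R]_2) :
  M 0 0 = N 0 0 -> M 0 1 = N 0 1 -> M 1 0 = N 1 0 -> M 1 1 = N 1 1 -> M = N.
Proof.
move=> e00 e01 e10 e11; apply/matrixP => i j.
have ord2 (k : 'I_2) : k = 0 \/ k = 1.
  by case: k => [[|[|//]]] ?; [left | right]; apply/val_inj.
by case: (ord2 i) => ->; case: (ord2 j) => ->.
Qed.

Lemma unimodular_row2_completion (r : 'rV[R]_2) :
  unimodular_row r -> exists2 M : 'M[R]_2, M \in unitmx & row 0 M = r.
Proof.
rewrite /unimodular_row => -[c]; rewrite sum_ord2 => hc.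
pose M := \matrix_(i < 2, j < 2) if i == 0 then r 0 j else [:: - c 0 1; c 0 0]`_j.
pose N := \matrix_(i < 2, j < 2)
  if i == 0 then [:: c 0 0; - r 0 1]`_j else [:: c 0 1; r 0 0]`_j.
(* [N] is the adjugate of [M], and [\det M = c0 r0 + c1 r1 = 1]. *)
have [uM _] : M \in unitmx /\ N \in unitmx.
  by apply: mulmx1_unit; apply: mx2_ext; rewrite !mul_mx2E !mxE /= -?hc; ring.
exists M => //; apply/rowP => j; rewrite !mxE.
by case: j => [[|[|//]]] ? /=; congr (r 0 _); apply/val_inj.
Qed.

Lemma mx_equiv_row0_delta (B : 'M[R]_2) :
  row 0 B = delta_mx 0 0 -> mx_equiv B (diag_mx (\row_i if i == 0 then 1 else B 1 1)).
Proof.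
move=> rowB; have B0E j : B 0 j = (delta_mx 0 0 : 'rV[R]_2) 0 j by rewrite -rowB mxE.
have [B00 B01] : B 0 0 = 1 /\ B 0 1 = 0 by rewrite !B0E !mxE.
pose E := delta_mx 1 0 : 'M[R]_2.
(* [E *m E = 0], so [1 - a E] is invertible with inverse [1 + a E]. *)
have [uP _] : 1%:M - B 1 0 *: E \in unitmx /\ 1%:M + B 1 0 *: E \in unitmx.
  by apply: mulmx1_unit; apply: mx2_ext; rewrite !mul_mx2E !mxE /=; ring.
exists (1%:M - B 1 0 *: E), 1%:M; rewrite unitmx1 mulmx1; do 2!split=> //.
by apply: mx2_ext; rewrite mul_mx2E !mxE /= ?B00 ?B01; ring.
Qed.

Lemma rowspan_has_unimodular_diag1 (A : 'M[R]_2) :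
  rowspan_has_unimodular A ->
  exists d : R, mx_equiv A (diag_mx (\row_(i < 2) if i == 0 then 1 else d)).
Proof.
case=> x xA_unimodular.
have [P uP rowP] := unimodular_row2_completion (unimodular_row_of_mulmx xA_unimodular).
have [M uM rowM] : exists2 M : 'M[R]_2, M \in unitmx & row 0 M = row 0 (P *m A).
  by apply: unimodular_row2_completion; rewrite row_mul rowP.
have row0_PAQ : row 0 (P *m A *m invmx M) = delta_mx 0 0.
  by rewrite row_mul -rowM -row_mul mulmxV // row1.
exists ((P *m A *m invmx M) 1 1); apply: mx_equiv_trans (mx_equiv_row0_delta row0_PAQ).
by exists P, (invmx M); rewrite unitmx_inv.
Qed.

End TwoByTwo.

Theorem lemma2p4 (R : comUnitRingType) (A : 'M[R]_2) :
  entries_generate_unit A ->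
  ((exists D : 'M[R]_2, is_diag_mx D /\ mx_equiv A D) <-> rowspan_has_unimodular A)
  /\ (rowspan_has_unimodular A ->
      exists d : R, mx_equiv A (diag_mx (\row_(i < 2) if i == 0 then 1 else d))).
Proof.
move=> A_unit; split; last exact: rowspan_has_unimodular_diag1.
split=> [[D [D_diag AD]] | /rowspan_has_unimodular_diag1 [d Ad]].
  apply: rowspan_has_unimodular_equiv (mx_equiv_sym AD) _.
  exact: diag_rowspan_has_unimodular D_diag (entries_generate_unit_equiv AD A_unit).
exists (diag_mx (\row_(i < 2) if i == 0 then 1 else d)).
by split; first exact: diag_mx_is_diag.
Qed.
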